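(* Let $G$ be a connected bipartite graph with bipartition $(U,V)$, $|U|\ge|V|$. Let $V_W\subseteq V$ be the set of vertices of $V$ adjacent to a leaf, $\overline{V_W}=V\setminus V_W$, $U_L\subseteq U$ a set of leaves such that each $v\in V_W$ is adjacent to exactly one element of $U_L$ and $|U_L|=|V_W|$, and $\overline{U_L}=U\setminus U_L$. For $S\subseteq\overline{U_L}$ and $j\ge1$ let $g_j(S)$ be the number of independent sets $\mathcal C$ of $G$ with $|\mathcal C|=j$ and $\mathcal C\cap\overline{U_L}=S$, and $g(S)=\sum_{j=1}^{\alpha(G)}(-1)^{j-1}g_j(S)$. Suppose $\overline{V_W}\neq\emptyset$. Then $g(\emptyset)=1$, and for nonempty $S\subseteq \overline{U_L}$, $g(S)=(-1)^{|S|+|V_W|+1}$ if $N(S)=\overline{V_W}$ and $g(S)=0$ otherwise.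
   Context: A leaf is a vertex with exactly one neighbor. $N(S)$ is the set of vertices adjacent to some vertex of $S$. An independent set is a set of pairwise non-adjacent vertices; $\alpha(G)$ is the maximum size of one. *)

From mathcomp Require Import all_boot all_order all_algebra.
Set Implicit Arguments. Unset Strict Implicit. Unset Printing Implicit Defensive.
Import GRing.Theory Num.Theory.

Section GraphDefs.
Variables (T : finType) (e : rel T).

Definition simple_graph : Prop := symmetric e /\ irreflexive e.

Definition connected_graph : Prop := forall x y : T, connect e x y.

Definition bipartition (U V : {set T}) : Prop :=
  [/\ U :|: V = [set: T], U :&: V = set0 &
      forall x y, e x y -> (x \in U) && (y \in V) || (x \in V) && (y \in U)].

Definition leaf (x : T) : bool := #|[set y | e x y]| == 1%N.

Definition nbhd (S : {set T}) : {set T} := [set y | [exists x in S, e x y]].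

Definition independent (C : {set T}) : bool :=
  [forall x in C, forall y in C, ~~ e x y].

Definition alpha : nat := \max_(C : {set T} | independent C) #|C|.

Definition VW (V : {set T}) : {set T} := [set v in V | [exists u, e v u && leaf u]].

Definition gj (U UL : {set T}) (j : nat) (S : {set T}) : nat :=
  #|[set C : {set T} | [&& independent C, #|C| == j & C :&: (U :\: UL) == S]]|.

Definition g (U UL : {set T}) (S : {set T}) : int :=
  (\sum_(1 <= j < alpha.+1) (-1) ^+ j.-1 * (gj U UL j S)%:Z)%R.

End GraphDefs.

From mathcomp Require Import all_boot all_order all_algebra.
Import GRing.Theory Num.Theory.
Set Implicit Arguments. Unset Strict Implicit. Unset Printing Implicit Defensive.
Local Open Scope ring_scope.

(* Apart from the term of the empty set, g(S) is minus the alternating sum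
   of (-1)^|C| over the independent sets C with C :&: (U :\: UL) = S, and
   sign-reversing involutions evaluate it.  For v in V_W with leaf partner
   u in U_L, toggling u is such an involution on the sets avoiding v, so only
   sets containing V_W survive; these avoid U_L and meet U exactly in S.  If
   S is adjacent to a vertex of V_W no such set exists, if some x in
   V :\: V_W is not adjacent to S then toggling x cancels everything, and
   otherwise S :|: V_W is the only survivor. *)

Lemma sum_level_card (I : finType) (P : pred I) (f : I -> nat) (a : nat -> int) n :
  (forall i, P i -> (f i <= n)%N) ->
  \sum_(1 <= j < n.+1) a j * #|[set i | P i && (f i == j)]|%:Z
    = \sum_(i | P i && (0 < f i)%N) a (f i).
Proof.
move=> le_fn.
have level_sum j : a j * #|[set i | P i && (f i == j)]|%:Z
                   = \sum_(i | P i) (if f i == j then a (f i) else 0).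
  rewrite -natz mulr_natr -sumr_const -big_mkcondr.
  by apply: eq_big => i; rewrite inE // => /andP[_ /eqP ->].
rewrite (eq_bigr _ (fun j _ => level_sum j)) exchange_big big_mkcondr /=.
apply: eq_bigr => i Pi; rewrite -big_mkcondr /=.
rewrite (eq_big (fun j => j == f i) a) => [|j|j /eqP <-]; last by [].
  by rewrite big_nat1_eq ltnS le_fn ?andbT.
by rewrite eq_sym.
Qed.

Section AlternatingSums.
Variable T : finType.
Implicit Types (x y : T) (A C : {set T}) (P : pred {set T}).

Definition toggle x C : {set T} := if x \in C then C :\ x else x |: C.

Definition alt_sum P : int := \sum_(C | P C) (-1) ^+ #|C|.

Lemma toggleK x : involutive (toggle x).
Proof.
move=> C; rewrite {2}/toggle; case: ifP => xC; rewrite /toggle.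
  by rewrite setD11 setD1K.
by rewrite setU11 setU1K ?xC.
Qed.

Lemma in_toggle x y C : y != x -> (y \in toggle x C) = (y \in C).
Proof. by move=> yx; rewrite /toggle; case: ifP; rewrite !inE (negbTE yx). Qed.

Lemma toggleD1 x C : toggle x C :\ x = C :\ x.
Proof.
apply/setP => y; rewrite !inE; case: (eqVneq y x) => //= yx.
by rewrite in_toggle.
Qed.

Lemma toggleI x C A : x \notin A -> toggle x C :&: A = C :&: A.
Proof.
move=> xA; apply/setP => y; rewrite !inE.
case: (eqVneq y x) => [->|yx]; first by rewrite (negbTE xA) !andbF.
by rewrite in_toggle.
Qed.

Lemma sub_toggle x C A : x \notin A -> (A \subset toggle x C) = (A \subset C).
Proof.
move=> xA; apply/subsetP/subsetP => sub y yA.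
  have yx : y != x by apply: contraNneq xA => <-.
  by rewrite -(in_toggle C yx) sub.
by rewrite in_toggle ?sub //; apply: contraNneq xA => <-.
Qed.

Lemma sign_toggle x C : (-1) ^+ #|toggle x C| = - (-1) ^+ #|C| :> int.
Proof.
rewrite /toggle; case: ifP => xC.
  by rewrite [in RHS](cardsD1 x C) xC add1n exprS mulN1r opprK.
by rewrite cardsU1 xC add1n exprS mulN1r.
Qed.

Lemma alt_sum_toggle_eq0 x P :
  (forall C, P (toggle x C) = P C) -> alt_sum P = 0.
Proof.
move=> Ptoggle.
have sumN : alt_sum P = - alt_sum P.
  rewrite {1}/alt_sum (reindex_inj (can_inj (toggleK x))) /=.
  by rewrite (eq_big _ _ Ptoggle (fun C _ => sign_toggle x C)) sumrN.
by apply/eqP; move/eqP: sumN; rewrite -subr_eq0 opprK -mulr2n mulrn_eq0.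
Qed.

Lemma alt_sum_mem u v P :
    u != v -> (forall C, v \notin C -> P (toggle u C) = P C) ->
  alt_sum P = alt_sum [pred C | P C && (v \in C)].
Proof.
move=> uv Ptoggle; rewrite {1}/alt_sum (bigID (fun C => v \in C)) /=.
suff notin0 : alt_sum [pred C | P C && (v \notin C)] = 0.
  by move: notin0; rewrite /alt_sum => ->; rewrite addr0.
apply: (alt_sum_toggle_eq0 (x := u)) => C /=; rewrite in_toggle 1?eq_sym //.
by case: (boolP (v \in C)) => [|/Ptoggle ->]; rewrite ?andbF.
Qed.
End AlternatingSums.

Section Independence.
Variables (T : finType) (e : rel T).
Implicit Types (x y : T) (C S U UL : {set T}).

Lemma independentP C :
  reflect (forall x y, x \in C -> y \in C -> ~~ e x y) (independent e C).
Proof.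
apply: (iffP forall_inP) => [indC x y xC yC | indC x xC].
  by move/forall_inP: (indC x xC); apply.
by apply/forall_inP => y; apply: indC.
Qed.

Lemma independent0 : independent e set0.
Proof. by apply/independentP => x y; rewrite inE. Qed.

Lemma card_le_alpha C : independent e C -> (#|C| <= alpha e)%N.
Proof. exact: (@leq_bigmax_cond _ (independent e) (fun C => #|C|)). Qed.

Definition indep_trace (B S : {set T}) : pred {set T} :=
  [pred C | independent e C && (C :&: B == S)].

Lemma g_alt_sum U UL S :
  g e U UL S = (S == set0)%:Z - alt_sum (indep_trace (U :\: UL) S).
Proof.
set P := indep_trace _ S.
have gjE j : gj e U UL j S = #|[set C | P C && (#|C| == j)]|.
  by apply: eq_card => C; rewrite !inE /= andbA andbAC.
rewrite /g (eq_bigr _ (fun j _ => congr2 _ erefl (congr1 Posz (gjE j)))).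
rewrite sum_level_card => [|C /andP[/card_le_alpha //]].
have empty_term : \sum_(C | P C && (C == set0)) (-1) ^+ #|C| = (S == set0)%:Z.
  rewrite (eq_bigl (fun C => (C == set0) && P C)) => [|C]; last by rewrite andbC.
  rewrite big_mkcondr big_pred1_eq /P /indep_trace /=.
  rewrite independent0 set0I cards0 expr0 [set0 == S]eq_sym.
  by case: (S == set0).
rewrite /alt_sum [in RHS](bigID (fun C => C == set0)) /= empty_term opprD addNKr.
rewrite -sumrN; apply: eq_big => C; first by rewrite card_gt0.
by move=> /andP[_ /prednK <-]; rewrite exprS mulN1r opprK.
Qed.

Lemma independent_setD1 x C : symmetric e ->
  (forall y, e x y -> y \notin C) -> independent e C = independent e (C :\ x).
Proof.
move=> sym_e xC; apply/independentP/independentP => indC a b aC bC.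
  by apply: indC; [move: aC | move: bC]; rewrite inE => /andP[].
case: (eqVneq a x) => [-> | ax].
  by apply/negP => /xC; rewrite bC.
case: (eqVneq b x) => [-> | bx].
  by apply/negP; rewrite sym_e => /xC; rewrite aC.
by apply: indC; rewrite !inE ?ax ?bx.
Qed.

Lemma independent_toggle x C : simple_graph e ->
  (forall y, e x y -> y \notin C) -> independent e (toggle x C) = independent e C.
Proof.
move=> [sym_e irr_e] xC; rewrite (independent_setD1 sym_e xC).
rewrite (@independent_setD1 x) ?toggleD1 // => y exy.
by rewrite in_toggle ?xC //; apply: contraTneq exy => ->; rewrite irr_e.
Qed.

Lemma leaf_adj_eq u y z : leaf e u -> e u y -> e u z -> y = z.
Proof.
move=> /cards1P[w Nu] uy uz.
have : y \in [set y | e u y] by rewrite inE.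
have : z \in [set y | e u y] by rewrite inE.
by rewrite Nu !inE => /eqP -> /eqP ->.
Qed.

Lemma leaf_adj_exists u : leaf e u -> exists y, e u y.
Proof.
move=> /cards1P[y Nu]; exists y.
by have := set11 y; rewrite -Nu inE.
Qed.

Lemma nbhd0 : nbhd e set0 = set0.
Proof.
by apply/setP => x; rewrite !inE; apply/exists_inP => -[y]; rewrite inE.
Qed.
End Independence.

Section LeafReduction.
Variables (T : finType) (e : rel T) (U V UL : {set T}).
Hypotheses (simple_e : simple_graph e) (bip : bipartition e U V).
Hypotheses (UL_sub : UL \subset U) (UL_leaf : forall u, u \in UL -> leaf e u).
Hypothesis VW_UL : forall v, v \in VW e V -> #|[set u in UL | e v u]| = 1%N.
Implicit Types (x y : T) (A B C S : {set T}).

Local Notation W := (VW e V).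
Local Notation Ub := (U :\: UL).

Lemma memU_V x : (x \in U) = (x \notin V).
Proof.
case: bip => UV UIV _; apply/idP/idP => [xU | xV].
  by apply/negP => xV; move/setP/(_ x): UIV; rewrite !inE xU xV.
by move/setP/(_ x): UV; rewrite !inE (negbTE xV) orbF => ->.
Qed.

Lemma edge_memV x y : e x y -> (y \in V) = (x \in U).
Proof.
case: bip => _ _ /[apply] /orP[/andP[xU yV] | /andP[xV yU]].
  by rewrite xU yV.
by rewrite memU_V xV -[y \in V]negbK -memU_V yU.
Qed.

Lemma U_independent x y : x \in U -> y \in U -> ~~ e x y.
Proof.
by move=> xU yU; apply/negP => /edge_memV; rewrite xU -[y \in V]negbK -memU_V yU.
Qed.

Lemma V_independent x y : x \in V -> y \in V -> ~~ e x y.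
Proof. by move=> xV yV; apply/negP => /edge_memV; rewrite yV memU_V xV. Qed.

Lemma VW_subV : W \subset V.
Proof. by apply/subsetP => x; rewrite inE => /andP[]. Qed.

Lemma UL_notin_V u : u \in UL -> u \notin V.
Proof. by move=> /(subsetP UL_sub); rewrite memU_V. Qed.

Lemma UL_adj_VW u y : u \in UL -> e u y -> y \in W.
Proof.
move=> uUL euy; rewrite inE (edge_memV euy) (subsetP UL_sub) //=.
by apply/existsP; exists u; rewrite simple_e.1 euy UL_leaf.
Qed.

Lemma VW_leaf_partner v : v \in W -> exists2 u, u \in UL & e v u.
Proof.
move=> /VW_UL/eqP/cards1P[u partner].
have : u \in [set u] by rewrite inE.
by rewrite -partner inE => /andP[]; exists u.
Qed.

Definition indep_trace_VW S : pred {set T} :=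
  [pred C | indep_trace e Ub S C && (W \subset C)].

Lemma alt_sum_indep_trace_VW S :
  alt_sum (indep_trace e Ub S) = alt_sum (indep_trace_VW S).
Proof.
suff contains_seq s : {subset s <= W} -> alt_sum (indep_trace e Ub S)
    = alt_sum [pred C | indep_trace e Ub S C && ([set:: s] \subset C)].
  by rewrite (contains_seq (enum W)) ?set_enum // => x; rewrite mem_enum.
elim: s => [_ | v s IHs sub_vs].
  by apply: eq_bigl => C; rewrite /= set_nil sub0set andbT.
have vW : v \in W by apply: sub_vs; rewrite mem_head.
have [u uUL evu] := VW_leaf_partner vW.
have uNv : u != v.
  by apply: contraNneq (UL_notin_V uUL) => ->; apply: (subsetP VW_subV).
rewrite IHs => [|x xs]; last by apply: sub_vs; rewrite inE xs orbT.
rewrite (alt_sum_mem uNv) => [|C vC]; last first.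
  have euv : e u v by rewrite simple_e.1.
  have u_nbhd y : e u y -> y \notin C.
    by move/(leaf_adj_eq (UL_leaf uUL) euv) <-.
  have uNUb : u \notin Ub by rewrite inE uUL.
  have uNs : u \notin [set:: s].
    apply: contra (UL_notin_V uUL); rewrite inE => us.
    by apply: (subsetP VW_subV); apply: sub_vs; rewrite inE us orbT.
  by rewrite /= /indep_trace /= independent_toggle // toggleI // sub_toggle.
by apply: eq_bigl => C; rewrite /= set_cons subUset sub1set andbAC andbA.
Qed.

Lemma nbhd_subV S x : S \subset U -> x \in nbhd e S -> x \in V.
Proof.
by move=> SU; rewrite inE => /exists_inP[y yS /edge_memV ->]; apply: (subsetP SU).
Qed.

Lemma setI_UV A B : A \subset U -> B \subset V -> A :&: B = set0.
Proof.
move=> AU BV; apply/setP => x; rewrite !inE; apply/andP => -[xA xB].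
by move: (subsetP AU x xA); rewrite memU_V (subsetP BV x xB).
Qed.

Lemma indep_trace_VW_capU S C x :
  indep_trace_VW S C -> x \in C -> x \in U -> x \in S.
Proof.
move=> /andP[/andP[indC /eqP <-] WC] xC xU; rewrite !inE xC xU andbT.
apply/negP => /[dup] xUL /UL_leaf/leaf_adj_exists[y exy].
have yC : y \in C by apply: (subsetP WC); apply: UL_adj_VW exy.
by move/independentP: indC => /(_ x y xC yC); rewrite exy.
Qed.

Lemma independent_setU_VW S : S \subset U -> nbhd e S = V :\: W ->
  independent e (S :|: W).
Proof.
move=> SU NS; have SW s w : s \in S -> w \in W -> ~~ e s w.
  move=> sS wW; apply/negP => esw.
  have : w \in nbhd e S by rewrite inE; apply/exists_inP; exists s.
  by rewrite NS inE wW.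
apply/independentP => x y; rewrite !in_setU => /orP[xS|xW] /orP[yS|yW].
- by apply: U_independent; apply: (subsetP SU).
- exact: SW.
- by rewrite simple_e.1; apply: SW.
- by apply: V_independent; apply: (subsetP VW_subV).
Qed.

Lemma indep_trace_VW_eq S C : S \subset Ub -> nbhd e S = V :\: W ->
  indep_trace_VW S C = (C == S :|: W).
Proof.
move=> SUb NS; have SU : S \subset U := subset_trans SUb (subsetDl _ _).
apply/idP/eqP => [PC | ->]; last first.
  rewrite /indep_trace_VW /indep_trace /= independent_setU_VW // subsetUr andbT.
  by rewrite setIUl (setIidPl SUb) setIC setI_UV ?setU0 ?eqxx ?subsetDl ?VW_subV.
have [/andP[indC /eqP CUb] WC] := andP PC.
apply/eqP; rewrite eqEsubset subUset WC -{2}CUb subsetIl !andbT.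
apply/subsetP => x xC; rewrite inE.
case: (boolP (x \in U)) => [xU | ]; first by rewrite (indep_trace_VW_capU PC).
rewrite memU_V negbK => xV; apply/orP; right; apply: contraT => xNW.
have : x \in nbhd e S by rewrite NS inE xNW.
rewrite inE => /exists_inP[s sS esx].
have sC : s \in C by rewrite -CUb inE in sS; case/andP: sS.
by move/independentP: indC => /(_ s x sC xC); rewrite esx.
Qed.

Lemma alt_sum_indep_trace_VW_adj S x : x \in W -> x \in nbhd e S ->
  alt_sum (indep_trace_VW S) = 0.
Proof.
move=> xW; rewrite inE => /exists_inP[s sS esx]; apply: big_pred0 => C.
apply/negP => /andP[/andP[/independentP indC /eqP CUb] WC].
have sC : s \in C by rewrite -CUb inE in sS; case/andP: sS.
by have := indC s x sC (subsetP WC x xW); rewrite esx.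
Qed.

Lemma alt_sum_indep_trace_VW_free S x :
  x \in V -> x \notin W -> x \notin nbhd e S -> alt_sum (indep_trace_VW S) = 0.
Proof.
move=> xV xNW xNS; apply: (alt_sum_toggle_eq0 (x := x)) => C.
have xNUb : x \notin Ub by rewrite inE negb_and memU_V xV orbT.
rewrite /indep_trace_VW /indep_trace /= toggleI // sub_toggle //.
case: (boolP (C :&: Ub == S)) => [/eqP CUb | ]; last by rewrite !andbF.
rewrite independent_toggle // => y exy; apply/negP => yC.
have yU : y \in U by rewrite memU_V (edge_memV exy) memU_V xV.
have eyx : e y x by rewrite simple_e.1.
case: (boolP (y \in UL)) => [yUL | yNUL].
  by rewrite (UL_adj_VW yUL eyx) in xNW.
have yS : y \in S by rewrite -CUb !inE yC yNUL yU.
by move: xNS; rewrite inE => /exists_inP; apply; exists y.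
Qed.

Lemma alt_sum_indep_trace S : S \subset Ub ->
  alt_sum (indep_trace e Ub S)
    = if nbhd e S == V :\: W then (-1) ^+ (#|S| + #|W|) else 0.
Proof.
move=> SUb; have SU : S \subset U := subset_trans SUb (subsetDl _ _).
rewrite alt_sum_indep_trace_VW.
case: eqP => [NS | /eqP].
  rewrite /alt_sum (big_pred1 (S :|: W)) => [|C]; last first.
    exact: indep_trace_VW_eq.
  by rewrite cardsU setI_UV ?VW_subV // cards0 subn0.
rewrite eqEsubset negb_and => /orP[] /subsetPn[x].
  move=> xNS; rewrite in_setD (nbhd_subV SU xNS) andbT negbK => xW.
  exact: alt_sum_indep_trace_VW_adj xW xNS.
by rewrite in_setD => /andP[xNW xV] xNS; apply: alt_sum_indep_trace_VW_free xNS.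
Qed.

End LeafReduction.

Theorem lemma5p7 (T : finType) (e : rel T) (U V UL : {set T}) :
  simple_graph e ->
  connected_graph e ->
  bipartition e U V ->
  (#|V| <= #|U|)%N ->
  UL \subset U ->
  (forall u, u \in UL -> leaf e u) ->
  (forall v, v \in VW e V -> #|[set u in UL | e v u]| = 1%N) ->
  #|UL| = #|VW e V| ->
  V :\: VW e V != set0 ->
  g e U UL set0 = 1%R /\
  (forall S : {set T}, S \subset U :\: UL -> S != set0 ->
     g e U UL S =
       (if nbhd e S == V :\: VW e V
        then (-1) ^+ (#|S| + #|VW e V| + 1)
        else 0)%R).
Proof.
move=> simple_e _ bip _ UL_sub UL_leaf VW_UL _ VWc_n0.
have value := alt_sum_indep_trace simple_e bip UL_sub UL_leaf VW_UL.
split=> [|S SUb S_n0]; rewrite g_alt_sum value ?sub0set //.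
  by rewrite nbhd0 eq_sym (negbTE VWc_n0) eqxx subr0.
by rewrite (negbTE S_n0) sub0r; case: ifP; rewrite ?oppr0 // addn1 exprS mulN1r.
Qed.
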